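(* Let $(T_0,\widetilde T_0)$ be a joint pair of closed abstract Friedrichs operators on a complex Hilbert space $\mathcal{H}$, with $T_1:=\widetilde T_0^*$, $\widetilde T_1:=T_0^*$ and $\mathcal{W}_0:=\operatorname{dom}T_0=\operatorname{dom}\widetilde T_0$. Then the restrictions $T_1|_{\mathcal{W}_0+\operatorname{ker}\widetilde T_1}$ and $\widetilde T_1|_{\mathcal{W}_0+\operatorname{ker}T_1}$ are mutually adjoint, i.e. $(T_1|_{\mathcal{W}_0+\operatorname{ker}\widetilde T_1})^*=\widetilde T_1|_{\mathcal{W}_0+\operatorname{ker}T_1}$ and $(\widetilde T_1|_{\mathcal{W}_0+\operatorname{ker}T_1})^*=T_1|_{\mathcal{W}_0+\operatorname{ker}\widetilde T_1}$, and each of them is a bijection from its domain onto $\mathcal{H}$.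
   Context: $\mathcal{H}$ is a complex Hilbert space with inner product $\langle\cdot,\cdot\rangle$ and norm $\|\cdot\|$. A pair $(T,\widetilde T)$ of densely defined linear operators on $\mathcal{H}$ is a joint pair of abstract Friedrichs operators if: (T1) $T$ and $\widetilde T$ have a common dense domain $\mathcal{D}$ and $\langle T\varphi,\psi\rangle=\langle\varphi,\widetilde T\psi\rangle$ for all $\varphi,\psi\in\mathcal{D}$; (T2) there is $c>0$ with $\|(T+\widetilde T)\varphi\|\le c\|\varphi\|$ for all $\varphi\in\mathcal{D}$; (T3) there is $\mu_0>0$ with $\langle (T+\widetilde T)\varphi,\varphi\rangle\ge 2\mu_0\|\varphi\|^2$ for all $\varphi\in\mathcal{D}$. A joint pair of closed abstract Friedrichs operators is such a pair $(T_0,\widetilde T_0)$ in which both operators are closed. One has $T_0\subseteq T_1$, $\widetilde T_0\subseteq\widetilde T_1$ and $\operatorname{dom}T_1=\operatorname{dom}\widetilde T_1$. *)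

From HB Require Import structures.
From mathcomp Require Import all_boot all_order all_algebra.
From mathcomp Require Import complex reals.
Set Implicit Arguments. Unset Strict Implicit. Unset Printing Implicit Defensive.
Import Order.TTheory GRing.Theory Num.Theory.
Local Open Scope ring_scope.

Section Hilbert.
Variable R : realType.
Local Notation C := R[i].
Variable V : lmodType C.

Record inner_product (ip : V -> V -> C) : Prop := InnerProduct {
  ip_linl : forall (a : C) (x y z : V), ip (a *: x + y) z = a * ip x z + ip y z;
  ip_conj : forall x y : V, ip y x = conjc (ip x y);
  ip_ge0  : forall x : V, 0 <= ip x x;  (* in the order of C: real and >= 0 *)
  ip_eq0  : forall x : V, ip x x = 0 -> x = 0 }.

Definition hnorm (ip : V -> V -> C) (x : V) : R := Num.sqrt (complex.Re (ip x x)).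

Definition cauchy_seq (ip : V -> V -> C) (u : nat -> V) : Prop :=
  forall e : R, 0 < e -> exists N : nat, forall m n : nat,
    (N <= m)%N -> (N <= n)%N -> hnorm ip (u m - u n) < e.

Definition seq_converges_to (ip : V -> V -> C) (u : nat -> V) (l : V) : Prop :=
  forall e : R, 0 < e -> exists N : nat, forall n : nat,
    (N <= n)%N -> hnorm ip (u n - l) < e.

Record hilbert_space (ip : V -> V -> C) : Prop := HilbertSpace {
  hs_inner : inner_product ip;
  hs_complete : forall u : nat -> V, cauchy_seq ip u ->
                  exists l : V, seq_converges_to ip u l }.

(** An operator is a domain together with a map; only its values on the
  domain are meaningful. *)
Record op := Op { dom : V -> Prop; app : V -> V }.

Definition subspace (D : V -> Prop) : Prop :=
  D 0 /\ forall (a : C) (x y : V), D x -> D y -> D (a *: x + y).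

Definition dense_in (ip : V -> V -> C) (D : V -> Prop) : Prop :=
  forall (x : V) (e : R), 0 < e -> exists d : V, D d /\ hnorm ip (x - d) < e.

Definition linear_op (T : op) : Prop :=
  subspace (dom T) /\
  forall (a : C) (x y : V), dom T x -> dom T y ->
    app T (a *: x + y) = a *: app T x + app T y.

Definition densely_defined_linear (ip : V -> V -> C) (T : op) : Prop :=
  linear_op T /\ dense_in ip (dom T).

Definition closed_op (ip : V -> V -> C) (T : op) : Prop :=
  forall (u : nat -> V) (x y : V),
    (forall n, dom T (u n)) ->
    seq_converges_to ip u x -> seq_converges_to ip (fun n => app T (u n)) y ->
    dom T x /\ app T x = y.

Definition is_adjoint (ip : V -> V -> C) (T S : op) : Prop :=
  (forall y : V, dom S y <->
     exists z : V, forall x : V, dom T x -> ip (app T x) y = ip x z) /\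
  (forall x y : V, dom T x -> dom S y -> ip (app T x) y = ip x (app S y)).

Definition op_restrict (T : op) (D : V -> Prop) : op := Op D (app T).

Definition op_kernel (T : op) : V -> Prop := fun x => dom T x /\ app T x = 0.

Definition set_sum (D E : V -> Prop) : V -> Prop :=
  fun x => exists d e : V, D d /\ E e /\ x = d + e.

Definition bijective_onto_space (T : op) : Prop :=
  (forall x y : V, dom T x -> dom T y -> app T x = app T y -> x = y) /\
  (forall h : V, exists x : V, dom T x /\ app T x = h).

Definition joint_pair_AFO (ip : V -> V -> C) (T T' : op) : Prop :=
  densely_defined_linear ip T /\ densely_defined_linear ip T' /\
  (forall x : V, dom T x <-> dom T' x) /\
  (forall x y : V, dom T x -> dom T y -> ip (app T x) y = ip x (app T' y)) /\
  (exists c : R, 0 < c /\ forall x : V, dom T x ->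
      hnorm ip (app T x + app T' x) <= c * hnorm ip x) /\
  (exists mu0 : R, 0 < mu0 /\ forall x : V, dom T x ->
      (((2 * mu0 * hnorm ip x ^+ 2)%R)%:C)%C <= ip (app T x + app T' x) x).

Definition closed_joint_pair_AFO (ip : V -> V -> C) (T T' : op) : Prop :=
  joint_pair_AFO ip T T' /\ closed_op ip T /\ closed_op ip T'.

End Hilbert.

(* Put M := T1 + T1~.  Riesz' representation theorem, proved here by minimising
   the energy |T x|^2 - 2 Re phi(x), turns the boundedness (T2) of T0 + T0~ into
   dom T1 <= dom T1~ and makes M a bounded symmetric extension of T0 + T0~; by
   density it inherits the coercivity (T3): Re <M u, u> >= 2 mu |u|^2.  For
   x in W0 and k in ker T1~ one gets
   Re <T1 (x + k), x + k> >= mu (|x + k|^2 + |k|^2), so |x| and |k| are bounded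
   by |T1 (x + k)|.  Hence A = T1 on W0 + ker T1~ is injective and, T0 and
   ker T1~ being closed, has closed range; the range is dense because h _|_ ran A
   forces T1~ h = 0 and then <M h, h> = 0.  So A is bijective, and so is B by the
   symmetry of the hypotheses.  Finally <A a, b> = <a, B b>, which together with
   the surjectivity of A and B makes them mutually adjoint. *)

From mathcomp Require Import all_boot all_order all_algebra.
From mathcomp Require Import complex reals boolp classical_sets.
From mathcomp Require Import ring lra.
Set Implicit Arguments. Unset Strict Implicit. Unset Printing Implicit Defensive.
Import Order.TTheory GRing.Theory Num.Theory.
Local Open Scope ring_scope.
Local Open Scope complex_scope.

Lemma complexRe_inj (R : rcfType) (a b : R[i]) :
  complex.Re a = complex.Re b -> complex.Re ('i * a) = complex.Re ('i * b) -> a = b.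
Proof.
case: a => a1 a2; case: b => b1 b2 /= -> h.
by congr Complex; apply: oppr_inj; move: h; rewrite !mul0r !mul1r !add0r.
Qed.

Lemma Re_realM (R : rcfType) (r : R) (z : R[i]) : complex.Re (r%:C * z) = r * complex.Re z.
Proof. by case: z => a b /=; ring. Qed.

Section InnerProduct.
Variables (R : realType) (V : lmodType R[i]) (ip : V -> V -> R[i]).
Hypothesis hip : inner_product ip.
Local Notation N := (hnorm ip).

Lemma ipDl x y z : ip (x + y) z = ip x z + ip y z.
Proof. by have := ip_linl hip 1 x y z; rewrite scale1r mul1r. Qed.

Lemma ip0l y : ip 0 y = 0.
Proof. by apply: (addrI (ip 0 y)); rewrite -ipDl !addr0. Qed.

Lemma ipZl a x z : ip (a *: x) z = a * ip x z.
Proof. by have := ip_linl hip a x 0 z; rewrite addr0 ip0l addr0. Qed.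

Lemma ipNl x z : ip (- x) z = - ip x z.
Proof. by rewrite -scaleN1r ipZl mulN1r. Qed.

Lemma conj_ip x y : conjc (ip x y) = ip y x.
Proof. by rewrite (ip_conj hip x y). Qed.

Lemma ipDr x y z : ip x (y + z) = ip x y + ip x z.
Proof. by rewrite -conj_ip ipDl rmorphD /= !conj_ip. Qed.

Lemma ipZr a x y : ip x (a *: y) = conjc a * ip x y.
Proof. by rewrite -conj_ip ipZl rmorphM /= conj_ip. Qed.

Lemma ip0r x : ip x 0 = 0.
Proof. by rewrite -conj_ip ip0l rmorph0. Qed.

Lemma ipNr x z : ip x (- z) = - ip x z.
Proof. by rewrite -conj_ip ipNl rmorphN /= conj_ip. Qed.

Lemma ipBr x y z : ip x (y - z) = ip x y - ip x z.
Proof. by rewrite ipDr ipNr. Qed.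

Definition rip x y : R := complex.Re (ip x y).

Lemma ripC x y : rip x y = rip y x.
Proof. by rewrite /rip -conj_ip; case: (ip y x). Qed.

Lemma ripDl x y z : rip (x + y) z = rip x z + rip y z.
Proof. by rewrite /rip ipDl raddfD. Qed.

Lemma ripDr x y z : rip x (y + z) = rip x y + rip x z.
Proof. by rewrite /rip ipDr raddfD. Qed.

Lemma ripNl x z : rip (- x) z = - rip x z.
Proof. by rewrite /rip ipNl raddfN. Qed.

Lemma ripNr x z : rip x (- z) = - rip x z.
Proof. by rewrite /rip ipNr raddfN. Qed.

Lemma ripBl x y z : rip (x - y) z = rip x z - rip y z.
Proof. by rewrite ripDl ripNl. Qed.

Lemma ripBr x y z : rip x (y - z) = rip x y - rip x z.
Proof. by rewrite ripDr ripNr. Qed.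

Lemma ripZl (r : R) x z : rip (r%:C *: x) z = r * rip x z.
Proof. by rewrite /rip ipZl Re_realM. Qed.

Lemma ripZr (r : R) x z : rip x (r%:C *: z) = r * rip x z.
Proof. by rewrite ripC ripZl ripC. Qed.

Lemma rip0l z : rip 0 z = 0.
Proof. by rewrite /rip ip0l. Qed.

Lemma rip0r z : rip z 0 = 0.
Proof. by rewrite /rip ip0r. Qed.

Lemma ReiM_ip x y : complex.Re ('i * ip x y) = - rip x ('i *: y).
Proof. by rewrite /rip ipZr; case: (ip x y) => a b /=; ring. Qed.

Lemma rip_ge0 x : 0 <= rip x x.
Proof. by have := ip_ge0 hip x; rewrite lecE => /andP[]. Qed.

Lemma rip_eq0 x : rip x x = 0 -> x = 0.
Proof.
move=> h; apply: (ip_eq0 hip).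
have := ip_ge0 hip x; rewrite lecE => /andP[/eqP hIm _].
by move: h hIm; rewrite /rip; case: (ip x x) => a b /= -> ->.
Qed.

Lemma hnorm_ge0 x : 0 <= N x.
Proof. exact: sqrtr_ge0. Qed.

Lemma hnorm_sqr x : N x ^+ 2 = rip x x.
Proof. by rewrite /hnorm sqr_sqrtr // rip_ge0. Qed.

Lemma hnorm_eq0 x : N x = 0 -> x = 0.
Proof. by move=> h; apply: rip_eq0; rewrite -hnorm_sqr h expr0n. Qed.

Lemma hnorm0 : N 0 = 0.
Proof. by rewrite /hnorm ip0l /= sqrtr0. Qed.

Lemma hnormN x : N (- x) = N x.
Proof. by rewrite /hnorm ipNl ipNr opprK. Qed.

Lemma hnormB x y : N (x - y) = N (y - x).
Proof. by rewrite -hnormN opprB. Qed.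

Lemma hnormZi x : N ('i *: x) = N x.
Proof.
by rewrite /hnorm ipZl ipZr; congr Num.sqrt; case: (ip x x) => a b /=; ring.
Qed.

Lemma rip_sqr_le x y : rip x y ^+ 2 <= rip x x * rip y y.
Proof.
have [y0|ny0] := eqVneq (rip y y) 0.
  by rewrite (rip_eq0 y0) !rip0r expr0n /= mulr0.
have q_gt0 : 0 < rip y y by rewrite lt0r ny0 rip_ge0.
(* expand [0 <= |x - (p/q) y|^2] with [p = rip x y], [q = |y|^2] *)
have := rip_ge0 (x - (rip x y / rip y y)%:C *: y).
rewrite !ripBl !ripBr !ripZl !ripZr (ripC y x).
set p := rip x y; set q := rip y y.
have -> : rip x x - p / q * p - (p / q * p - p / q * (p / q * q))
          = rip x x - p ^+ 2 / q by field; rewrite gt_eqF.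
by rewrite subr_ge0 ler_pdivrMr.
Qed.

Lemma rip_leM x y : rip x y <= N x * N y.
Proof.
have := rip_sqr_le x y; rewrite -!hnorm_sqr -exprMn.
have : 0 <= N x * N y by rewrite mulr_ge0 ?hnorm_ge0.
set P := N x * N y; nra.
Qed.

Lemma rip_geNM x y : - (N x * N y) <= rip x y.
Proof. by have := rip_leM x (- y); rewrite ripNr hnormN lerNl. Qed.

Lemma norm_rip_le x y : `|rip x y| <= N x * N y.
Proof. by rewrite ler_norml rip_geNM rip_leM. Qed.

Lemma dist_rip_le a b a' b' :
  `|rip a b - rip a' b'| <= N (a - a') * N b + N a' * N (b - b').
Proof.
have -> : rip a b - rip a' b' = rip (a - a') b + rip a' (b - b').
  by rewrite ripBl ripBr addrA subrK.
by apply: le_trans (ler_normD _ _) _; rewrite lerD ?norm_rip_le.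
Qed.

Lemma hnormD_le x y : N (x + y) <= N x + N y.
Proof.
have : N (x + y) ^+ 2 <= (N x + N y) ^+ 2.
  by rewrite hnorm_sqr ripDl !ripDr (ripC y x) sqrrD !hnorm_sqr; have := rip_leM x y; lra.
have := hnorm_ge0 (x + y); have := hnorm_ge0 x; have := hnorm_ge0 y; nra.
Qed.

End InnerProduct.

Section RealEpsilon.
Variable R : realType.

Lemma le0_eps (a K : R) : (forall e : R, 0 < e -> a <= e * K) -> a <= 0.
Proof.
move=> H; rewrite leNgt; apply/negP => a_gt0.
have K_ge0 : 0 <= K by have := H 1 ltr01; lra.
have e_gt0 : 0 < a / (K + 1) by rewrite divr_gt0 //; lra.
have := H _ e_gt0.
have -> : a / (K + 1) * K = a - a / (K + 1) by field; lra.
lra.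
Qed.

Lemma eq0_eps (a K : R) : (forall e : R, 0 < e -> `|a| <= e * K) -> a = 0.
Proof.
by move=> H; apply: normr0_eq0; apply/eqP; rewrite eq_le normr_ge0 andbT (le0_eps H).
Qed.

Lemma quadratic_ge0_lin_eq0 (g Q : R) : (forall t, 0 <= t * g + t ^+ 2 * Q) -> g = 0.
Proof.
move=> H; apply/eqP; rewrite eq_le; apply/andP; split.
  apply: (@le0_eps _ Q) => e e_gt0; have := H (- e); nra.
rewrite -oppr_le0; apply: (@le0_eps _ Q) => e e_gt0; have := H e; nra.
Qed.

Definition epsn (n : nat) : R := n.+1%:R^-1.

Lemma epsn_gt0 n : 0 < epsn n.
Proof. by rewrite invr_gt0 ltr0n. Qed.

Lemma epsn_small (e : R) : 0 < e -> exists N0, forall n, (N0 <= n)%N -> epsn n < e.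
Proof.
move=> e_gt0; have inve_ge0 : 0 <= e^-1 by rewrite invr_ge0 ltW.
exists (Num.Def.archi_bound e^-1) => n le_N0n.
rewrite /epsn invf_plt ?posrE ?ltr0n //.
by apply: lt_le_trans (archi_boundP inve_ge0) _; rewrite ler_nat leqW.
Qed.

End RealEpsilon.

Definition in_closure (R : realType) (V : lmodType R[i]) (ip : V -> V -> R[i])
    (P : V -> Prop) (w : V) : Prop :=
  forall e : R, 0 < e -> exists v, P v /\ hnorm ip (v - w) < e.

Section Convergence.
Variables (R : realType) (V : lmodType R[i]) (ip : V -> V -> R[i]).
Hypothesis hip : inner_product ip.
Local Notation N := (hnorm ip).
Local Notation cvg := (seq_converges_to ip).

Lemma cvg_epsn (u : nat -> V) w : (forall n, N (u n - w) < epsn R n) -> cvg u w.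
Proof.
move=> H e e_gt0; have [N0 HN] := epsn_small e_gt0.
by exists N0 => n le_N0n; apply: lt_trans (H n) (HN n le_N0n).
Qed.

Lemma cvg_cauchy u l : cvg u l -> cauchy_seq ip u.
Proof.
move=> H e e_gt0; have [N0 HN] := H _ (divr_gt0 e_gt0 (ltr0Sn _ 1)).
exists N0 => m n le_N0m le_N0n.
have := hnormD_le hip (u m - l) (l - u n).
rewrite addrA subrK (hnormB hip l); have := HN _ le_N0m; have := HN _ le_N0n; lra.
Qed.

Lemma cauchy_seq_le (u v : nat -> V) (K : R) : 0 <= K ->
  (forall n m, N (u n - u m) <= K * N (v n - v m)) ->
  cauchy_seq ip v -> cauchy_seq ip u.
Proof.
move=> K_ge0 Huv Hv e e_gt0.
have K1_gt0 : 0 < K + 1 by lra.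
have [N0 HN] := Hv _ (divr_gt0 e_gt0 K1_gt0).
exists N0 => m n le_N0m le_N0n; apply: le_lt_trans (Huv m n) _.
have := HN _ _ le_N0m le_N0n; rewrite ltr_pdivlMr // => lt_ve.
have := hnorm_ge0 ip (v m - v n); nra.
Qed.

Lemma cvg_le (u v : nat -> V) a b (K : R) : 0 <= K ->
  (forall n, N (u n - a) <= K * N (v n - b)) -> cvg v b -> cvg u a.
Proof.
move=> K_ge0 Huv Hv e e_gt0.
have K1_gt0 : 0 < K + 1 by lra.
have [N0 HN] := Hv _ (divr_gt0 e_gt0 K1_gt0).
exists N0 => n le_N0n; apply: le_lt_trans (Huv n) _.
have := HN _ le_N0n; rewrite ltr_pdivlMr // => lt_ve.
have := hnorm_ge0 ip (v n - b); nra.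
Qed.

Lemma cvgB (u v : nat -> V) a b : cvg u a -> cvg v b -> cvg (fun n => u n - v n) (a - b).
Proof.
move=> Hu Hv e e_gt0; have e2_gt0 : 0 < e / 2 by rewrite divr_gt0.
have [N1 HN1] := Hu _ e2_gt0; have [N2 HN2] := Hv _ e2_gt0.
exists (maxn N1 N2) => n; rewrite geq_max => /andP[le_N1n le_N2n].
have -> : u n - v n - (a - b) = (u n - a) + - (v n - b)
  by rewrite !opprB addrACA [RHS]addrACA [- v n + _]addrC.
apply: le_lt_trans (hnormD_le hip _ _) _; rewrite (hnormN hip).
have := HN1 _ le_N1n; have := HN2 _ le_N2n; lra.
Qed.

Lemma cvg_in_closure (P : V -> Prop) u l :
  (forall n, P (u n)) -> seq_converges_to ip u l -> in_closure ip P l.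
Proof.
by move=> Pu ul e e_gt0; have [N0 HN] := ul e e_gt0; exists (u N0); split; last exact: HN.
Qed.

End Convergence.

Section LinearOperators.
Variables (R : realType) (V : lmodType R[i]).
Implicit Types (D : V -> Prop) (T : op V).

Lemma subspaceD D x y : subspace D -> D x -> D y -> D (x + y).
Proof. by move=> [_ DZD] Dx Dy; have := DZD 1 x y Dx Dy; rewrite scale1r. Qed.

Lemma subspaceZ D a x : subspace D -> D x -> D (a *: x).
Proof. by move=> [D0 DZD] Dx; have := DZD a x 0 Dx D0; rewrite addr0. Qed.

Lemma subspaceB D x y : subspace D -> D x -> D y -> D (x - y).
Proof. by move=> sD Dx Dy; rewrite -scaleN1r; apply: subspaceD sD Dx (subspaceZ _ sD Dy). Qed.

Lemma linear_op0 T : linear_op T -> app T 0 = 0.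
Proof.
move=> [[D0 _] linT]; apply: (addrI (app T 0)).
by have := linT 1 0 0 D0 D0; rewrite !scale1r addr0 => <-; rewrite addr0.
Qed.

Lemma linear_opD T x y : linear_op T -> dom T x -> dom T y ->
  app T (x + y) = app T x + app T y.
Proof. by move=> [_ linT] Dx Dy; have := linT 1 x y Dx Dy; rewrite !scale1r. Qed.

Lemma linear_opZ T a x : linear_op T -> dom T x -> app T (a *: x) = a *: app T x.
Proof.
move=> lT Dx; have := lT.2 a x 0 Dx lT.1.1.
by rewrite !addr0 linear_op0 // addr0.
Qed.

Lemma linear_opB T x y : linear_op T -> dom T x -> dom T y ->
  app T (x - y) = app T x - app T y.
Proof.
move=> lT Dx Dy; have Dny : dom T (- y) by rewrite -scaleN1r; apply: subspaceZ _ lT.1 Dy.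
by rewrite linear_opD // -scaleN1r linear_opZ // scaleN1r.
Qed.

Lemma kernel_subspace T : linear_op T -> subspace (op_kernel T).
Proof.
move=> lT; split; first by split; [exact: lT.1.1 | exact: linear_op0].
move=> a x y [Dx Tx] [Dy Ty]; split; first exact: lT.1.2.
by rewrite lT.2 // Tx Ty scaler0 addr0.
Qed.

Definition op_range T (v : V) : Prop := exists x, dom T x /\ app T x = v.

End LinearOperators.

Section Riesz.
Variables (R : realType) (V : lmodType R[i]) (ip : V -> V -> R[i]).
Hypothesis hH : hilbert_space ip.
Let hip := hs_inner hH.
Local Notation N := (hnorm ip).
Local Notation rip := (rip ip).
Local Notation cvg := (seq_converges_to ip).

Variable T : op V.
Hypothesis linT : linear_op T.
Variable phi : V -> R[i].
Hypothesis phi_lin :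
  forall a x y, dom T x -> dom T y -> phi (a *: x + y) = a * phi x + phi y.
Variable K : R.
Hypothesis phi_le : forall x, dom T x -> complex.Re (phi x) <= K * N (app T x).

Let phiZ a x : dom T x -> phi (a *: x) = a * phi x.
Proof.
move=> Dx; have phi0 : phi 0 = 0.
  have := @phi_lin 1 0 0 linT.1.1 linT.1.1; rewrite scale1r addr0 mul1r => h.
  by apply: (addrI (phi 0)); rewrite addr0 -h.
by have := @phi_lin a x 0 Dx linT.1.1; rewrite !addr0 phi0 addr0.
Qed.

Let phiD x y : dom T x -> dom T y -> phi (x + y) = phi x + phi y.
Proof. by move=> Dx Dy; have := @phi_lin 1 x y Dx Dy; rewrite scale1r mul1r. Qed.

Definition riesz_energy x := rip (app T x) (app T x) - 2 * complex.Re (phi x).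

Let energyDZ (t : R) x y : dom T x -> dom T y ->
  riesz_energy (x + t%:C *: y) = riesz_energy x
    + 2 * t * (rip (app T x) (app T y) - complex.Re (phi y))
    + t ^+ 2 * rip (app T y) (app T y).
Proof.
move=> Dx Dy; have Dty : dom T (t%:C *: y) := subspaceZ _ linT.1 Dy.
rewrite /riesz_energy linear_opD ?linear_opZ // phiD ?phiZ //.
rewrite !(ripDl hip, ripDr hip, ripZl hip, ripZr hip) (ripC hip (app T y)).
by rewrite raddfD /= Re_realM; ring.
Qed.

Let energy_ge x : dom T x -> - K ^+ 2 <= riesz_energy x.
Proof.
move=> Dx; rewrite /riesz_energy -(hnorm_sqr hip).
have := phi_le Dx; have := sqr_ge0 (N (app T x) - K); rewrite sqrrB; lra.
Qed.

Let m := inf (riesz_energy @` dom T).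

Let energy_lbound : has_lbound (riesz_energy @` dom T).
Proof. by exists (- K ^+ 2) => _ [y Dy <-]; apply: energy_ge. Qed.

Let m_le x : dom T x -> m <= riesz_energy x.
Proof. by move=> Dx; apply: ge_inf energy_lbound _ _; exists x. Qed.

Let minimizing_seq : exists d : nat -> V,
  forall n, dom T (d n) /\ riesz_energy (d n) < m + epsn R n.
Proof.
have hasinf : has_inf (riesz_energy @` dom T).
  by split => //; exists (riesz_energy 0), 0; first exact: linT.1.1.
suff /choice[d Hd] : forall n, exists x, dom T x /\ riesz_energy x < m + epsn R n by exists d.
by move=> n; have [_ [x Dx <-] ?] := inf_adherent (epsn_gt0 R n) hasinf; exists x.
Qed.

Section Minimizer.
Variable d : nat -> V.
Hypothesis d_min : forall n, dom T (d n) /\ riesz_energy (d n) < m + epsn R n.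

Let d_parallelogram n k :
  N (app T (d n) - app T (d k)) ^+ 2 <= 2 * epsn R n + 2 * epsn R k.
Proof.
have [Dn Jn] := d_min n; have [Dk Jk] := d_min k.
have Dnk : dom T (d n - d k) by apply: subspaceB linT.1 Dn Dk.
have Jmid := m_le (subspaceD linT.1 Dn (subspaceZ (- 2^-1)%:C linT.1 Dnk)).
have Jk_eq := energyDZ (-1) Dn Dnk.
rewrite rmorphN1 scaleN1r opprB addrC subrK in Jk_eq.
have Jmid_eq := energyDZ (- 2^-1) Dn Dnk.
rewrite (hnorm_sqr hip) -linear_opB //; lra.
Qed.

Lemma minimizing_cauchy : cauchy_seq ip (fun n => app T (d n)).
Proof.
move=> e e_gt0; have e2_gt0 : 0 < e ^+ 2 / 4 by rewrite divr_gt0 // exprn_gt0.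
have [N0 HN] := epsn_small e2_gt0; exists N0 => n k le_N0n le_N0k.
have := d_parallelogram n k; have := HN _ le_N0n; have := HN _ le_N0k.
have := hnorm_ge0 ip (app T (d n) - app T (d k)); nra.
Qed.

Variable w : V.
Hypothesis d_cvg : cvg (fun n => app T (d n)) w.

Lemma minimizer_Re y : dom T y -> complex.Re (phi y) = rip (app T y) w.
Proof.
move=> Dy; set Q := rip (app T y) (app T y).
suff /quadratic_ge0_lin_eq0 : forall t,
    0 <= t * (2 * (rip (app T y) w - complex.Re (phi y))) + t ^+ 2 * Q.
  by move/eqP; rewrite mulf_eq0 pnatr_eq0 subr_eq0 => /eqP <-.
move=> t; rewrite -oppr_le0.
apply: (@le0_eps _ _ (1 + 2 * `|t| * N (app T y))) => eta eta_gt0.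
have [N1 HN1] := epsn_small eta_gt0; have [N2 HN2] := d_cvg eta_gt0.
set n := maxn N1 N2; have [Dn Jn] := d_min n.
have Jlow := m_le (subspaceD linT.1 Dn (subspaceZ t%:C linT.1 Dy)).
rewrite energyDZ // in Jlow.
have small_n := HN1 n (leq_maxl _ _).
have close_n : `|rip (app T (d n) - w) (app T y)| <= eta * N (app T y).
  apply: le_trans (norm_rip_le hip _ _) _.
  by rewrite ler_wpM2r ?hnorm_ge0 // ltW // HN2 // leq_maxr.
have t_close : t * rip (app T (d n) - w) (app T y) <= `|t| * (eta * N (app T y)).
  by rewrite (le_trans (ler_norm _)) // normrM ler_wpM2l.
rewrite (ripBl hip) (ripC hip w) in t_close.
lra.
Qed.

End Minimizer.

Theorem riesz_representation : exists w,
  in_closure ip (op_range T) w /\ forall x, dom T x -> phi x = ip (app T x) w.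
Proof.
have [d d_min] := minimizing_seq.
have [w d_cvg] := hs_complete hH (minimizing_cauchy d_min).
exists w; split.
  by apply: (cvg_in_closure _ d_cvg) => n; exists (d n); case: (d_min n).
move=> x Dx; apply: complexRe_inj; first by rewrite (minimizer_Re d_min d_cvg Dx).
have Dix : dom T ('i *: x) := subspaceZ _ linT.1 Dx.
by rewrite -(phiZ 'i Dx) (minimizer_Re d_min d_cvg Dix) linear_opZ // /rip (ipZl hip).
Qed.

End Riesz.

Lemma closed_range_surjective (R : realType) (V : lmodType R[i]) (ip : V -> V -> R[i])
    (T : op V) :
  hilbert_space ip -> linear_op T ->
  (forall w, in_closure ip (op_range T) w -> op_range T w) ->
  (forall h, (forall x, dom T x -> ip (app T x) h = 0) -> h = 0) ->
  forall f, op_range T f.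
Proof.
move=> hH linT range_closed range_perp f; have hip := hs_inner hH.
have phi_lin a x y : dom T x -> dom T y ->
    ip (app T (a *: x + y)) f = a * ip (app T x) f + ip (app T y) f.
  by move=> Dx Dy; rewrite linT.2 // (ipDl hip) (ipZl hip).
have phi_le x : dom T x -> complex.Re (ip (app T x) f) <= hnorm ip f * hnorm ip (app T x).
  by move=> _; rewrite mulrC; apply: rip_leM.
have [w [w_cl w_rep]] := riesz_representation hH linT phi_lin phi_le.
suff -> : f = w by apply: range_closed.
apply/eqP; rewrite -subr_eq0; apply/eqP; apply: range_perp => x Dx.
by rewrite (ipBr hip) w_rep // subrr.
Qed.

Section Adjoint.
Variables (R : realType) (V : lmodType R[i]) (ip : V -> V -> R[i]).
Hypothesis hip : inner_product ip.
Local Notation N := (hnorm ip).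
Local Notation rip := (rip ip).

Lemma rip_closure0 z (P : V -> Prop) l :
  (forall v, P v -> rip z v = 0) -> in_closure ip P l -> rip z l = 0.
Proof.
move=> Pz Pl; apply: (@eq0_eps _ _ (N z)) => e e_gt0.
have [v [Pv lt_vl]] := Pl e e_gt0.
have := dist_rip_le hip z v z l.
rewrite (Pz v Pv) sub0r normrN subrr (hnorm0 hip) mul0r add0r => /le_trans-> //.
by rewrite mulrC ler_wpM2r ?hnorm_ge0 // ltW.
Qed.

Lemma ip_closure0 z l : in_closure ip (fun v => ip z v = 0) l -> ip z l = 0.
Proof.
move=> zl; apply: complexRe_inj.
  by apply: (rip_closure0 _ zl) => v; rewrite /rip => ->.
rewrite mulr0 (ReiM_ip hip); apply/eqP; rewrite oppr_eq0; apply/eqP.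
apply: (@rip_closure0 _ (fun v => ip z v = 0)) => [v|e e_gt0]; first by rewrite /rip => ->.
have [v [zv lt_vl]] := zl e e_gt0.
exists ('i *: v); split; first by rewrite (ipZr hip) zv mulr0.
by rewrite -scalerBr (hnormZi hip).
Qed.

Lemma dense_ip_inj (D : V -> Prop) z1 z2 : dense_in ip D ->
  (forall x, D x -> ip x z1 = ip x z2) -> z1 = z2.
Proof.
move=> dD eqz; apply/eqP; rewrite -subr_eq0; apply/eqP/(rip_eq0 hip).
apply: (@rip_closure0 _ D) => [v Dv|e e_gt0].
  by rewrite (ripC hip) /rip (ipBr hip) eqz // subrr.
by have [d [Dd lt_d]] := dD (z1 - z2) e e_gt0; exists d; rewrite (hnormB hip).
Qed.

Lemma hnorm_le_dense (D : V -> Prop) z (K : R) : dense_in ip D -> 0 <= K ->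
  (forall x, D x -> rip x z <= K * N x) -> N z <= K.
Proof.
move=> dD K_ge0 Dz.
suff : N z ^+ 2 - K * N z <= 0 by have := hnorm_ge0 ip z; nra.
apply: (@le0_eps _ _ (K + N z)) => e e_gt0.
have [x [Dx lt_zx]] := dD z e e_gt0.
have le_x : N x <= N z + N (z - x).
  by rewrite (hnormB hip) -[X in N X <= _](subrK z x) addrC; apply: hnormD_le.
have := rip_leM hip (z - x) z; have := Dz x Dx; rewrite (hnorm_sqr hip).
have -> : rip z z = rip x z + rip (z - x) z by rewrite (ripBl hip) addrC subrK.
have : K * N x <= K * (N z + N (z - x)) by rewrite ler_wpM2l.
have : N (z - x) * N z <= e * N z by rewrite ler_wpM2r ?hnorm_ge0 // ltW.
have : K * N (z - x) <= K * e by rewrite ler_wpM2l // ltW.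
lra.
Qed.

Lemma adjoint_app (T S : op V) x z : is_adjoint ip T S -> dense_in ip (dom T) ->
  (forall y, dom T y -> ip (app T y) x = ip y z) -> dom S x /\ app S x = z.
Proof.
move=> [domS appS] dT Hxz; have Sx : dom S x by apply/domS; exists z.
by split => //; apply: (dense_ip_inj dT) => y Dy; rewrite -appS // Hxz.
Qed.

Lemma adjoint_linear (T S : op V) :
  is_adjoint ip T S -> dense_in ip (dom T) -> linear_op S.
Proof.
move=> adjTS dT.
have S_comb a x y : dom S x -> dom S y ->
    dom S (a *: x + y) /\ app S (a *: x + y) = a *: app S x + app S y.
  move=> Sx Sy; apply: (adjoint_app adjTS dT) => v Dv.
  by rewrite (ipDr hip) (ipZr hip) !adjTS.2 // (ipDr hip) (ipZr hip).
split; last by move=> a x y Sx Sy; case: (S_comb a x y Sx Sy).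
split; last by move=> a x y Sx Sy; case: (S_comb a x y Sx Sy).
by apply/adjTS.1; exists 0 => v _; rewrite !(ip0r hip).
Qed.

Lemma adjoint_kernel_closed (T S : op V) l :
  is_adjoint ip T S -> dense_in ip (dom T) ->
  in_closure ip (op_kernel S) l -> op_kernel S l.
Proof.
move=> adjTS dT kl; apply: (adjoint_app adjTS dT) => y Dy.
rewrite (ip0r hip); apply: ip_closure0 => e e_gt0.
have [k [[Sk Sk0] lt_kl]] := kl e e_gt0.
by exists k; split => //; rewrite adjTS.2 // Sk0 (ip0r hip).
Qed.

Lemma is_adjoint_of_onto (A B : op V) :
  (forall a b, dom A a -> dom B b -> ip (app A a) b = ip a (app B b)) ->
  (forall h, op_range A h) -> (forall h, op_range B h) -> is_adjoint ip A B.
Proof.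
move=> AB ontoA ontoB; split=> // y; split=> [By | [z Az]].
  by exists (app B y) => x Ax; apply: AB.
have [b [Bb Bbz]] := ontoB z; have [a [Aa Aab]] := ontoA (y - b).
suff -> : y = b by [].
apply/eqP; rewrite -subr_eq0; apply/eqP/(ip_eq0 hip).
by rewrite -{1}Aab (ipBr hip) Az // -Bbz -AB // subrr.
Qed.

End Adjoint.

Lemma joint_pair_AFO_sym (R : realType) (V : lmodType R[i]) (ip : V -> V -> R[i])
    (T T' : op V) :
  inner_product ip -> joint_pair_AFO ip T T' -> joint_pair_AFO ip T' T.
Proof.
move=> hip [ddT [ddT' [domE [formal [[c [c_gt0 bnd]] [mu [mu_gt0 coer]]]]]]].
do 2!split => //; split; first by move=> x; split => /domE.
split; first by move=> x y /domE Tx /domE Ty; rewrite -[RHS](conj_ip hip) formal // conj_ip.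
split; first by exists c; split => // x /domE Tx; rewrite addrC bnd.
by exists mu; split => // x /domE Tx; rewrite addrC coer.
Qed.

Section Friedrichs.
Variables (R : realType) (V : lmodType R[i]) (ip : V -> V -> R[i]).
Variables T0 T0' T1 T1' : op V.
Hypothesis hH : hilbert_space ip.
Hypothesis hJ : joint_pair_AFO ip T0 T0'.
Hypothesis adj1 : is_adjoint ip T0' T1.
Hypothesis adj1' : is_adjoint ip T0 T1'.
Let hip := hs_inner hH.
Local Notation N := (hnorm ip).
Local Notation rip := (rip ip).

Let lin0 : linear_op T0. Proof. by case: hJ => [[]]. Qed.
Let lin0' : linear_op T0'. Proof. by case: hJ => _ [[]]. Qed.
Let dense0 : dense_in ip (dom T0). Proof. by case: hJ => [[]]. Qed.
Let dense0' : dense_in ip (dom T0'). Proof. by case: hJ => _ [[]]. Qed.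
Let dom0E x : dom T0 x <-> dom T0' x. Proof. by case: hJ => _ [_ [H _]]; apply: H. Qed.
Let formal0 x y : dom T0 x -> dom T0 y -> ip (app T0 x) y = ip x (app T0' y).
Proof. by case: hJ => _ [_ [_ [H _]]]; apply: H. Qed.
Let bounded0 : exists c, 0 < c /\
  forall x, dom T0 x -> N (app T0 x + app T0' x) <= c * N x.
Proof. by case: hJ => _ [_ [_ [_ []]]]. Qed.
Let coercive0 : exists mu, 0 < mu /\
  forall x, dom T0 x -> 2 * mu * N x ^+ 2 <= rip (app T0 x + app T0' x) x.
Proof.
case: hJ => _ [_ [_ [_ [_ [mu [mu_gt0 coer]]]]]]; exists mu; split => // x Dx.
by have := coer x Dx; rewrite lecE => /andP[].
Qed.

Lemma T0_sub_T1 x : dom T0 x -> dom T1 x /\ app T1 x = app T0 x.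
Proof.
move=> Dx; apply: (adjoint_app hip adj1 dense0') => y /dom0E Dy.
by rewrite -[LHS](conj_ip hip) -formal0 // conj_ip.
Qed.

Lemma T0'_sub_T1' x : dom T0 x -> dom T1' x /\ app T1' x = app T0' x.
Proof. by move=> Dx; apply: (adjoint_app hip adj1' dense0) => y Dy; rewrite formal0. Qed.

Lemma linear_T1 : linear_op T1. Proof. exact: (adjoint_linear hip adj1 dense0'). Qed.
Lemma linear_T1' : linear_op T1'. Proof. exact: (adjoint_linear hip adj1' dense0). Qed.

Definition plusT1 u := app T1 u + app T1' u.

Lemma T1_sub_T1' u : dom T1 u ->
  dom T1' u /\ forall x, dom T0 x -> ip (app T0 x + app T0' x) u = ip x (plusT1 u).
Proof.
move=> Du; have [c [c_gt0 bnd]] := bounded0.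
have lin_id : linear_op (Op (dom T0) id) by split; [exact: lin0.1 | by []].
pose phi x := ip (app T0 x + app T0' x) u.
have phi_lin a x y : dom T0 x -> dom T0 y -> phi (a *: x + y) = a * phi x + phi y.
  move=> Dx Dy; have /dom0E Dx' := Dx; have /dom0E Dy' := Dy.
  by rewrite /phi lin0.2 // lin0'.2 // !(ipDl hip) !(ipZl hip); ring.
have phi_le x : dom T0 x -> complex.Re (phi x) <= c * N u * N x.
  move=> Dx; apply: le_trans (rip_leM hip _ _) _.
  by rewrite mulrAC ler_wpM2r ?hnorm_ge0 ?bnd.
have [w [_ w_rep]] := riesz_representation hH lin_id phi_lin phi_le.
have [Du' T1'u] : dom T1' u /\ app T1' u = w - app T1 u.
  apply: (adjoint_app hip adj1' dense0) => x Dx; have /dom0E Dx' := Dx.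
  by rewrite (ipBr hip) -(w_rep x Dx) /phi -adj1.2 // (ipDl hip) addrK.
by split => // x Dx; rewrite /plusT1 T1'u subrKC; apply: w_rep.
Qed.

Lemma plusT1_W0 x : dom T0 x -> plusT1 x = app T0 x + app T0' x.
Proof. by move=> Dx; rewrite /plusT1 (T0_sub_T1 Dx).2 (T0'_sub_T1' Dx).2. Qed.

Lemma plusT1D u v : dom T1 u -> dom T1 v -> plusT1 (u + v) = plusT1 u + plusT1 v.
Proof.
move=> Du Dv; have [Du' _] := T1_sub_T1' Du; have [Dv' _] := T1_sub_T1' Dv.
by rewrite /plusT1 (linear_opD linear_T1) // (linear_opD linear_T1') // addrACA.
Qed.

Lemma plusT1B u v : dom T1 u -> dom T1 v -> plusT1 (u - v) = plusT1 u - plusT1 v.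
Proof.
move=> Du Dv; have [Du' _] := T1_sub_T1' Du; have [Dv' _] := T1_sub_T1' Dv.
by rewrite /plusT1 (linear_opB linear_T1) // (linear_opB linear_T1') // opprD addrACA.
Qed.

Lemma plusT1Z a u : dom T1 u -> plusT1 (a *: u) = a *: plusT1 u.
Proof.
move=> Du; have [Du' _] := T1_sub_T1' Du.
by rewrite /plusT1 (linear_opZ a linear_T1) // (linear_opZ a linear_T1') // scalerDr.
Qed.

Lemma plusT1_bounded : exists c, 0 < c /\
  forall u, dom T1 u -> N (plusT1 u) <= c * N u.
Proof.
have [c [c_gt0 bnd]] := bounded0; exists c; split => // u Du.
apply: (hnorm_le_dense hip dense0); first by rewrite mulr_ge0 ?hnorm_ge0 ?ltW.
move=> x Dx; rewrite /rip -(T1_sub_T1' Du).2 //.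
apply: le_trans (rip_leM hip _ _) _.
by rewrite mulrAC ler_wpM2r ?hnorm_ge0 ?bnd.
Qed.

Lemma plusT1_rip_sym u v : dom T1 u -> dom T1 v -> rip (plusT1 u) v = rip u (plusT1 v).
Proof.
move=> Du Dv; have [c [c_gt0 plusT1_le]] := plusT1_bounded.
apply/eqP; rewrite -subr_eq0; apply/eqP.
apply: (@eq0_eps _ _ (N (plusT1 u) + N u * c)) => e e_gt0.
have [x [Dx lt_vx]] := dense0 v e_gt0; have [T1x _] := T0_sub_T1 Dx.
have Dh : dom T1 (v - x) := subspaceB linear_T1.1 Dv T1x.
have sym_x : rip (plusT1 u) x = rip u (plusT1 x).
  by rewrite (ripC hip (plusT1 u)) (ripC hip u) (plusT1_W0 Dx) /rip (T1_sub_T1' Du).2.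
have -> : rip (plusT1 u) v - rip u (plusT1 v)
          = rip (plusT1 u) (v - x) - rip u (plusT1 (v - x)).
  by rewrite (plusT1B Dv T1x) (ripBr hip (plusT1 u)) (ripBr hip u) sym_x; ring.
have := norm_rip_le hip (plusT1 u) (v - x); have := norm_rip_le hip u (plusT1 (v - x)).
have : N (plusT1 u) * N (v - x) <= N (plusT1 u) * e by rewrite ler_wpM2l ?hnorm_ge0 // ltW.
have : N u * N (plusT1 (v - x)) <= N u * (c * e).
  by rewrite ler_wpM2l ?hnorm_ge0 // (le_trans (plusT1_le _ Dh)) // ler_wpM2l ?ltW.
rewrite !ler_norml; lra.
Qed.

Lemma plusT1_sym u v : dom T1 u -> dom T1 v -> ip (plusT1 u) v = ip u (plusT1 v).
Proof.
move=> Du Dv; have Div : dom T1 ('i *: v) := subspaceZ _ linear_T1.1 Dv.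
apply: complexRe_inj; first exact: (plusT1_rip_sym Du Dv).
by rewrite !(ReiM_ip hip) plusT1_rip_sym // plusT1Z.
Qed.

Lemma plusT1_coercive : exists mu, 0 < mu /\
  forall u, dom T1 u -> 2 * mu * N u ^+ 2 <= rip (plusT1 u) u.
Proof.
have [mu [mu_gt0 coer0]] := coercive0; have [c [c_gt0 plusT1_le]] := plusT1_bounded.
exists mu; split => // u Du; rewrite -subr_ge0 -oppr_le0 (hnorm_sqr hip).
apply: (@le0_eps _ _ ((2 * mu + c) * (2 * N u + 1))) => e e_gt0.
have e1_gt0 : 0 < Num.min e 1 by rewrite lt_min e_gt0 ltr01.
have [x [Dx lt_ux]] := dense0 u e1_gt0; have [T1x _] := T0_sub_T1 Dx.
have ux_e : N (u - x) <= e by apply/ltW/(lt_le_trans lt_ux); rewrite ge_min lexx.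
have ux_1 : N (u - x) <= 1 by apply/ltW/(lt_le_trans lt_ux); rewrite ge_min lexx orbT.
have x_le : N x <= N u + 1.
  rewrite -[X in N X <= _](subrK u x) addrC; apply: le_trans (hnormD_le hip _ _) _.
  by rewrite (hnormB hip) lerD2l.
have du : rip u u - rip x x <= e * (2 * N u + 1).
  have := dist_rip_le hip u u x x; rewrite ler_norml => /andP[_].
  have : N (u - x) * N u <= e * N u by rewrite ler_wpM2r ?hnorm_ge0.
  have : N x * N (u - x) <= (N u + 1) * e by rewrite ler_pM ?hnorm_ge0.
  lra.
have dplus : rip (plusT1 x) x - rip (plusT1 u) u <= c * e * (2 * N u + 1).
  have := dist_rip_le hip (plusT1 u) u (plusT1 x) x.
  rewrite -(plusT1B Du T1x) ler_norml => /andP[+ _].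
  have : N (plusT1 (u - x)) * N u <= c * e * N u.
    rewrite ler_wpM2r ?hnorm_ge0 // (le_trans (plusT1_le _ (subspaceB linear_T1.1 Du T1x))) //.
    by rewrite ler_wpM2l // ltW.
  have : N (plusT1 x) * N (u - x) <= c * (N u + 1) * e.
    by rewrite ler_pM ?hnorm_ge0 // (le_trans (plusT1_le _ T1x)) // ler_wpM2l // ltW.
  lra.
have := coer0 x Dx; rewrite -(plusT1_W0 Dx) (hnorm_sqr hip).
have mu2_ge0 : 0 <= 2 * mu by rewrite mulr_ge0 // ltW.
have := ler_wpM2l mu2_ge0 du.
lra.
Qed.

End Friedrichs.

Section Restriction.
Variables (R : realType) (V : lmodType R[i]) (ip : V -> V -> R[i]).
Variables T0 T0' T1 T1' : op V.
Hypothesis hH : hilbert_space ip.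
Hypothesis hJ : joint_pair_AFO ip T0 T0'.
Hypothesis adj1 : is_adjoint ip T0' T1.
Hypothesis adj1' : is_adjoint ip T0 T1'.
Hypothesis closed0 : closed_op ip T0.
Let hip := hs_inner hH.
Local Notation N := (hnorm ip).
Local Notation rip := (rip ip).
Local Notation M := (plusT1 T1 T1').
Local Notation DA := (set_sum (dom T0) (op_kernel T1')).
Local Notation A := (op_restrict T1 DA).

Let lin0 : linear_op T0. Proof. by case: hJ => [[]]. Qed.
Let dense0 : dense_in ip (dom T0). Proof. by case: hJ => [[]]. Qed.
Let dom0E x : dom T0 x <-> dom T0' x. Proof. by case: hJ => _ [_ [H _]]; apply: H. Qed.
Let formal0 x y : dom T0 x -> dom T0 y -> ip (app T0 x) y = ip x (app T0' y).
Proof. by case: hJ => _ [_ [_ [H _]]]; apply: H. Qed.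
Let lin1 : linear_op T1 := linear_T1 hH hJ adj1.
Let lin1' : linear_op T1' := linear_T1' hH hJ adj1'.
Let kernel1' : subspace (op_kernel T1') := kernel_subspace lin1'.

Lemma T1_kernel k : op_kernel T1' k -> dom T1 k /\ app T1 k = M k.
Proof.
move=> [Dk T1'k]; split; last by rewrite /plusT1 T1'k addr0.
exact: (T1_sub_T1' hH (joint_pair_AFO_sym hip hJ) adj1' adj1 Dk).1.
Qed.

Lemma T1_W0_kernel x k : dom T0 x -> op_kernel T1' k ->
  app T1 (x + k) = app T0 x + M k.
Proof.
move=> Dx Kk; have [T1x <-] := T0_sub_T1 hH hJ adj1 Dx.
by have [T1k <-] := T1_kernel Kk; apply: linear_opD.
Qed.

Lemma DA_sub_dom1 a : DA a -> dom T1 a.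
Proof.
move=> [x [k [Dx [Kk ->]]]].
exact: subspaceD lin1.1 (T0_sub_T1 hH hJ adj1 Dx).1 (T1_kernel Kk).1.
Qed.

Lemma DA_subspace : subspace DA.
Proof.
split; first by exists 0, 0; rewrite addr0; split; [exact: lin0.1.1 | split; [exact: kernel1'.1|]].
move=> a _ _ [x [k [Dx [Kk ->]]]] [x' [k' [Dx' [Kk' ->]]]].
exists (a *: x + x'), (a *: k + k'); split; first exact: lin0.1.2.
by split; [exact: kernel1'.2 | rewrite scalerDr addrACA].
Qed.

Lemma linear_A : linear_op A.
Proof.
by split; [exact: DA_subspace | move=> a x y /DA_sub_dom1 Dx /DA_sub_dom1 Dy; apply: lin1.2].
Qed.

(* [2 Re <T1 (x + k), x + k> = Re <M (x + k), x + k> + Re <M k, k>] *)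
Lemma T1_DA_coercive : exists mu, 0 < mu /\ forall x k, dom T0 x -> op_kernel T1' k ->
  mu * (N (x + k) ^+ 2 + N k ^+ 2) <= rip (app T1 (x + k)) (x + k).
Proof.
have [mu [mu_gt0 coer]] := plusT1_coercive hH hJ adj1 adj1'.
exists mu; split => // x k Dx Kk.
have [T1k _] := T1_kernel Kk; have [T1x _] := T0_sub_T1 hH hJ adj1 Dx.
have := coer _ (subspaceD lin1.1 T1x T1k); have := coer _ T1k.
rewrite (plusT1D hH hJ adj1 adj1') // (plusT1_W0 hH hJ adj1 adj1' Dx) (T1_W0_kernel Dx Kk).
have Dx' : dom T0' x by apply/dom0E.
have f1 : rip (app T0 x) k = 0 by rewrite /rip adj1'.2 ?Kk.2 ?(ip0r hip) //; case: Kk.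
have f2 : rip (app T0' x) x = rip (app T0 x) x.
  by rewrite (ripC hip) /rip formal0.
have f3 : rip (app T0' x) k = rip (app T1 k) x by rewrite (ripC hip (app T1 k)) /rip adj1.2.
have [_ T1'k] := Kk.
rewrite !(ripDl hip, ripDr hip) T1'k !(rip0l hip) f1 f2 f3; lra.
Qed.

Lemma T1_DA_estimate : exists C, 0 <= C /\ forall x k, dom T0 x -> op_kernel T1' k ->
  N x <= C * N (app T1 (x + k)) /\ N k <= C * N (app T1 (x + k)).
Proof.
have [mu [mu_gt0 coer]] := T1_DA_coercive.
exists (2 / mu); split => [|x k Dx Kk]; first by rewrite divr_ge0 // ltW.
have le_x : N x <= N (x + k) + N k.
  by rewrite -(hnormN hip k) -[X in N X <= _](addrK k x); apply: hnormD_le.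
have := coer x k Dx Kk; have := rip_leM hip (app T1 (x + k)) (x + k).
have := hnorm_ge0 ip (x + k); have := hnorm_ge0 ip k; have := hnorm_ge0 ip (app T1 (x + k)).
move: le_x; set s := N (x + k); set r := N k; set g := N (app T1 (x + k)).
move=> le_x g_ge0 r_ge0 s_ge0 CS coer_xk.
have le_s : mu * s <= g.
  have [s0|s_gt0] := eqVneq s 0; first by rewrite s0 mulr0.
  rewrite -(ler_pM2r (_ : 0 < s)) ?lt0r ?s_gt0 //; nra.
have le_r : mu * r <= g.
  have : mu * (mu * r ^+ 2) <= g * g by nra.
  have : 0 <= mu * r by rewrite mulr_ge0 // ltW.
  nra.
rewrite mulrAC !ler_pdivlMr //; split; nra.
Qed.

Lemma T1_DA_injective a a' : DA a -> DA a' -> app T1 a = app T1 a' -> a = a'.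
Proof.
move=> [x [k [Dx [Kk ->]]]] [x' [k' [Dx' [Kk' ->]]]] eqT1.
have [C [C_ge0 est]] := T1_DA_estimate.
have Dxk : dom T1 (x + k) by apply: DA_sub_dom1; exists x, k.
have Dxk' : dom T1 (x' + k') by apply: DA_sub_dom1; exists x', k'.
have [] := est _ _ (subspaceB lin0.1 Dx Dx') (subspaceB kernel1' Kk Kk').
rewrite addrACA -opprD linear_opB // eqT1 subrr (hnorm0 hip) mulr0 => x0 k0.
have /(hnorm_eq0 hip)/eqP : N (x - x') = 0 by apply/eqP; rewrite eq_le x0 hnorm_ge0.
have /(hnorm_eq0 hip)/eqP : N (k - k') = 0 by apply/eqP; rewrite eq_le k0 hnorm_ge0.
by rewrite !subr_eq0 => /eqP-> /eqP->.
Qed.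

Lemma T1_DA_perp h : (forall a, DA a -> ip (app T1 a) h = 0) -> h = 0.
Proof.
move=> perp; have ker0 : op_kernel T1' 0 := kernel1'.1.
have Kh : op_kernel T1' h.
  apply: (adjoint_app hip adj1' dense0) => x Dx; rewrite (ip0r hip).
  by rewrite -(T0_sub_T1 hH hJ adj1 Dx).2 -[x]addr0 perp //; exists x, 0.
have [mu [mu_gt0 coer]] := plusT1_coercive hH hJ adj1 adj1'.
have [T1h T1hE] := T1_kernel Kh.
have DAh : DA h by exists 0, h; rewrite add0r; split; first exact: lin0.1.1.
have := coer h T1h; rewrite -T1hE /rip perp //=.
move=> h_le0; apply: (hnorm_eq0 hip); apply/eqP.
by rewrite -sqrf_eq0 eq_le sqr_ge0 andbT -(pmulr_rle0 _ (mulr_gt0 (ltr0Sn _ 1) mu_gt0)).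
Qed.

Lemma T1_DA_cauchy (xs ks : nat -> V) :
  (forall n, dom T0 (xs n)) -> (forall n, op_kernel T1' (ks n)) ->
  cauchy_seq ip (fun n => app T1 (xs n + ks n)) ->
  cauchy_seq ip xs /\ cauchy_seq ip ks.
Proof.
move=> Dxs Kks cT; have [C [C_ge0 est]] := T1_DA_estimate.
have est_nm n m :=
  est _ _ (subspaceB lin0.1 (Dxs n) (Dxs m)) (subspaceB kernel1' (Kks n) (Kks m)).
have T1B n m : app T1 (xs n - xs m + (ks n - ks m))
               = app T1 (xs n + ks n) - app T1 (xs m + ks m).
  have D1 p : dom T1 (xs p + ks p) by apply: DA_sub_dom1; exists (xs p), (ks p).
  by rewrite addrACA -opprD linear_opB.
split; apply: (cauchy_seq_le C_ge0 _ cT) => n m; rewrite -T1B.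
  exact: (est_nm n m).1.
exact: (est_nm n m).2.
Qed.

Lemma T1_DA_closed_range w : in_closure ip (op_range A) w -> op_range A w.
Proof.
move=> w_cl.
have /choice[xk Hxk] : forall n, exists p : V * V,
    [/\ dom T0 p.1, op_kernel T1' p.2 & N (app T1 (p.1 + p.2) - w) < epsn R n].
  move=> n; have [_ [[_ [[x [k [Dx [Kk ->]]]] <-]] lt_w]] := w_cl _ (epsn_gt0 R n).
  by exists (x, k).
pose xs n := (xk n).1; pose ks n := (xk n).2.
have Dxs n : dom T0 (xs n) by case: (Hxk n).
have Kks n : op_kernel T1' (ks n) by case: (Hxk n).
have cvT : seq_converges_to ip (fun n => app T1 (xs n + ks n)) w.
  by apply: cvg_epsn => n; case: (Hxk n).
have [cxs cks] := T1_DA_cauchy Dxs Kks (cvg_cauchy hip cvT).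
have [x cvx] := hs_complete hH cxs; have [k cvk] := hs_complete hH cks.
have Kk : op_kernel T1' k.
  exact: (adjoint_kernel_closed hip adj1' dense0 (cvg_in_closure Kks cvk)).
have [c [c_gt0 plus_le]] := plusT1_bounded hH hJ adj1 adj1'.
have cvM : seq_converges_to ip (fun n => M (ks n)) (M k).
  apply: (cvg_le (ltW c_gt0) _ cvk) => n.
  have [T1kn _] := T1_kernel (Kks n); have [T1k _] := T1_kernel Kk.
  rewrite -(plusT1B hH hJ adj1 adj1') //; apply: plus_le.
  exact: subspaceB lin1.1 T1kn T1k.
have cvT0 : seq_converges_to ip (fun n => app T0 (xs n)) (w - M k).
  have -> : (fun n => app T0 (xs n)) = fun n => app T1 (xs n + ks n) - M (ks n).
    by apply/funext => n; rewrite T1_W0_kernel // addrK.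
  exact: cvgB.
have [Dx T0x] := closed0 Dxs cvx cvT0.
by exists (x + k); split; [exists x, k | rewrite /= T1_W0_kernel // T0x subrK].
Qed.

Theorem T1_DA_bijective : bijective_onto_space A.
Proof.
split; first exact: T1_DA_injective.
exact: closed_range_surjective hH linear_A T1_DA_closed_range T1_DA_perp.
Qed.

Lemma T1_DA_formal_adjoint a b : DA a -> set_sum (dom T0) (op_kernel T1) b ->
  ip (app T1 a) b = ip a (app T1' b).
Proof.
move=> [x [k [Dx [Kk ->]]]] [y [l [Dy [[T1l T1l0] ->]]]].
have [T1'l _] := T1_sub_T1' hH hJ adj1 adj1' T1l.
have [T1'y T1'yE] := T0'_sub_T1' hH hJ adj1' Dy.
have [T1k T1kE] := T1_kernel Kk.
have Dx' : dom T0' x by apply/dom0E.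
have Dy' : dom T0' y by apply/dom0E.
rewrite T1_W0_kernel // -T1kE (linear_opD lin1') // T1'yE !(ipDl hip) !(ipDr hip).
congr (_ + _ + (_ + _)).
- exact: formal0.
- exact: adj1'.2.
- by rewrite -[LHS](conj_ip hip) -adj1.2 // conj_ip.
- by rewrite T1kE (plusT1_sym hH hJ adj1 adj1') // /plusT1 T1l0 add0r.
Qed.

End Restriction.

Theorem corollary3p2 (R : realType) (V : lmodType R[i]) (ip : V -> V -> R[i])
    (T0 T0' T1 T1' : op V) :
  hilbert_space ip ->
  closed_joint_pair_AFO ip T0 T0' ->
  is_adjoint ip T0' T1 ->   (* T1  = (T0~)^* *)
  is_adjoint ip T0 T1' ->   (* T1~ = T0^*    *)
  let W0 := dom T0 in
  let A := op_restrict T1 (set_sum W0 (op_kernel T1')) in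
  let B := op_restrict T1' (set_sum W0 (op_kernel T1)) in
  is_adjoint ip A B /\ is_adjoint ip B A /\
  bijective_onto_space A /\ bijective_onto_space B.
Proof.
move=> hH [hJ [closed0 closed0']] adj1 adj1' W0 A B.
have hip := hs_inner hH.
have domE : dom T0' = dom T0.
  by apply/funext => x; apply/propext; case: hJ => _ [_ [domE _]]; split => /domE.
have bijA : bijective_onto_space A := T1_DA_bijective hH hJ adj1 adj1' closed0.
have bijB : bijective_onto_space B.
  by have := T1_DA_bijective hH (joint_pair_AFO_sym hip hJ) adj1' adj1 closed0'; rewrite domE.
have AB a b : dom A a -> dom B b -> ip (app A a) b = ip a (app B b).
  by move=> Aa Bb; apply: (T1_DA_formal_adjoint hH hJ adj1 adj1' Aa Bb).
have BA b a : dom B b -> dom A a -> ip (app B b) a = ip b (app A a).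
  by move=> Bb Aa; rewrite -[LHS](conj_ip hip) -AB // conj_ip.
split; first exact: (is_adjoint_of_onto hip AB bijA.2 bijB.2).
by split; first exact: (is_adjoint_of_onto hip BA bijB.2 bijA.2).
Qed.
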